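(* Let $R>\pi$, $\varepsilon\in(0,1)$, $C>0$, and let $\phi\in C^0([0,R])$ satisfy $\phi(0)=\phi(R)=0$ and $\phi>0$ in $(0,R)$. Then there exists $\bar b>1$ such that the solution $\psi$ of $$-\psi''=\psi(1-\bar b\phi-\psi)\ \text{ in }(0,R),\qquad \psi(0)=\psi(R)=1-\varepsilon,$$ satisfies $\psi<1-\varepsilon$ in $(0,R)$, $\psi'(0)<-C$ and $\psi'(R)>C$.
   Context: Here ''the solution'' refers to the classical solution with values in $[0,1]$ obtained by the monotone (sub/supersolution) method, using $0$ and $1$ as sub- and supersolution. *)

From Stdlib Require Import Reals.
From Coquelicot Require Import Coquelicot.
Open Scope R_scope.

Definition cont_on_closed (f : R -> R) (a b : R) : Prop :=
  forall x, a <= x <= b ->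
    filterlim f (within (fun y => a <= y <= b) (locally x)) (locally (f x)).

Definition is_solution (L b eps : R) (phi psi : R -> R) : Prop :=
  cont_on_closed psi 0 L /\
  (exists dpsi : R -> R, forall x, 0 < x < L ->
      is_derive psi x (dpsi x) /\
      is_derive dpsi x (- (psi x * (1 - b * phi x - psi x)))) /\
  psi 0 = 1 - eps /\ psi L = 1 - eps.

Definition is_solution01 (L b eps : R) (phi psi : R -> R) : Prop :=
  is_solution L b eps phi psi /\ (forall x, 0 <= x <= L -> 0 <= psi x <= 1).

Definition is_right_deriv (f : R -> R) (x l : R) : Prop :=
  filterlim (fun h => (f (x + h) - f x) / h) (at_right 0) (locally l).
Definition is_left_deriv (f : R -> R) (x l : R) : Prop :=
  filterlim (fun h => (f (x + h) - f x) / h) (at_left 0) (locally l).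

(** For large [b], [phi >= m > 0] on [[d/2, L - d/2]] gives [psi'' >= k^2 psi] there, so
    [psi] lies below the barrier [exp (-k (x - d/2)) + exp (k (x - L + d/2))] and is at most
    [(1 - eps) / 4] on [[d, L - d]].  Near the ends one only knows [-1/4 <= psi'' <= b max phi];
    the lower bound makes [psi + x^2 / 8] convex, so [psi < 1 - eps] on [(0, d]] and the
    one-sided derivative at [0] exists and is at most [(psi d - (1 - eps)) / d + d / 8], which
    is below [-C] once [d] is small compared with [(1 - eps) / C]; the end [L] is symmetric.
    These estimates hold for every solution with values in [[0, 1]], so existence may be
    obtained by shooting rather than by sub- and supersolutions: the Picard iteration for the
    initial value problem with truncated nonlinearity converges, depends continuously on the
    initial slope, and the maximum principle keeps the solution in [[0, 1]]. *)

From Stdlib Require Import Reals Lra Lia Classical.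
From Coquelicot Require Import Coquelicot.
Open Scope R_scope.

(** * Continuity on closed intervals *)

Lemma continuous_eps (f : R -> R) (x : R) :
  continuous f x <->
  forall e, 0 < e -> exists d, 0 < d /\ forall y, Rabs (y - x) < d -> Rabs (f y - f x) < e.
Proof.
  unfold continuous; rewrite filterlim_locally; split.
  - intros H e He. destruct (H (mkposreal e He)) as [d Hd].
    exists d; split; [apply cond_pos | intros y Hy; apply (Hd y Hy)].
  - intros H e. destruct (H e (cond_pos e)) as [d [Hd0 Hd]].
    exists (mkposreal d Hd0). intros y Hy. apply (Hd y Hy).
Qed.

Lemma cont_on_closed_eps (f : R -> R) (a b : R) :
  cont_on_closed f a b <->
  forall x, a <= x <= b -> forall e, 0 < e -> exists d, 0 < d /\
    forall y, a <= y <= b -> Rabs (y - x) < d -> Rabs (f y - f x) < e.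
Proof.
  unfold cont_on_closed; split.
  - intros H x Hx e He.
    destruct (proj1 (filterlim_locally _ _) (H x Hx) (mkposreal e He)) as [d Hd].
    exists d; split; [apply cond_pos | intros y Hy Hyx; apply (Hd y Hyx Hy)].
  - intros H x Hx. apply filterlim_locally. intros e.
    destruct (H x Hx e (cond_pos e)) as [d [Hd0 Hd]].
    exists (mkposreal d Hd0). intros y Hyx Hy. apply (Hd y Hy Hyx).
Qed.

Lemma continuous_cont_on_closed (f : R -> R) (a b : R) :
  (forall x, continuous f x) -> cont_on_closed f a b.
Proof.
  intros Hf x _. exact (filterlim_filter_le_1 _ (filter_le_within _) (Hf x)).
Qed.

Lemma cont_on_closed_scal_plus (f g : R -> R) (k a b : R) :
  cont_on_closed f a b -> (forall x, continuous g x) ->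
  cont_on_closed (fun x => k * f x + g x) a b.
Proof.
  intros Hf Hg x Hx.
  apply (filterlim_comp_2 (fun y => k * f y) g Rplus
    (filterlim_comp _ _ _ f (Rmult k) _ _ _ (Hf x Hx) (filterlim_scal_r k (f x)))
    (continuous_cont_on_closed g a b Hg x Hx)).
  exact (filterlim_plus (k * f x) (g x)).
Qed.

Lemma cont_on_closed_sub (f : R -> R) (a b a' b' : R) :
  a <= a' -> b' <= b -> cont_on_closed f a b -> cont_on_closed f a' b'.
Proof.
  rewrite !cont_on_closed_eps. intros Ha Hb Hf x Hx e He.
  destruct (Hf x ltac:(lra) e He) as [d [Hd0 Hd]].
  exists d; split; [lra | intros y Hy; apply Hd; lra].
Qed.

Lemma cont_on_closed_reflect (f : R -> R) (c a b : R) :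
  cont_on_closed f (c - b) (c - a) -> cont_on_closed (fun x => f (c - x)) a b.
Proof.
  rewrite !cont_on_closed_eps. intros Hf x Hx e He.
  destruct (Hf (c - x) ltac:(lra) e He) as [d [Hd0 Hd]].
  exists d; split; [lra | intros y Hy Hyx; apply Hd; [lra | split_Rabs; lra]].
Qed.

Definition clamp (a b x : R) : R := Rmax a (Rmin b x).

Lemma clamp_in (a b x : R) : a <= b -> a <= clamp a b x <= b.
Proof. intros. unfold clamp, Rmax, Rmin. repeat destruct Rle_dec; lra. Qed.

Lemma clamp_id (a b x : R) : a <= x <= b -> clamp a b x = x.
Proof. intros. unfold clamp, Rmax, Rmin. repeat destruct Rle_dec; lra. Qed.

Lemma clamp_lipschitz (a b x y : R) : a <= b -> Rabs (clamp a b x - clamp a b y) <= Rabs (x - y).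
Proof. intros. unfold clamp, Rmax, Rmin. repeat destruct Rle_dec; split_Rabs; lra. Qed.

Lemma continuous_clamp (a b x : R) : a <= b -> continuous (clamp a b) x.
Proof.
  intros Hab. apply continuous_eps. intros e He. exists e; split; [lra|].
  intros y Hy. eapply Rle_lt_trans; [apply clamp_lipschitz|]; assumption.
Qed.

Lemma cont_on_closed_clamp (f : R -> R) (a b x : R) :
  a <= b -> cont_on_closed f a b -> continuous (fun y => f (clamp a b y)) x.
Proof.
  rewrite cont_on_closed_eps. intros Hab Hf. apply continuous_eps. intros e He.
  destruct (Hf (clamp a b x) (clamp_in a b x Hab) e He) as [d [Hd0 Hd]].
  exists d; split; [lra|]. intros y Hy. apply Hd; [apply clamp_in; lra|].
  eapply Rle_lt_trans; [apply clamp_lipschitz|]; assumption.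
Qed.

Lemma cont_on_closed_max (f : R -> R) (a b : R) : a <= b -> cont_on_closed f a b ->
  exists xm, a <= xm <= b /\ forall x, a <= x <= b -> f x <= f xm.
Proof.
  intros Hab Hf.
  destruct (continuity_ab_maj (fun y => f (clamp a b y)) a b Hab) as [xm [Hmax Hxm]].
  { intros c _. apply continuity_pt_filterlim, cont_on_closed_clamp; assumption. }
  exists xm; split; [assumption|]. intros x Hx.
  specialize (Hmax x Hx). rewrite !clamp_id in Hmax by lra. exact Hmax.
Qed.

Lemma cont_on_closed_pos_lower_bound (f : R -> R) (a b : R) : a <= b -> cont_on_closed f a b ->
  (forall x, a <= x <= b -> 0 < f x) -> exists m, 0 < m /\ forall x, a <= x <= b -> m <= f x.
Proof.
  intros Hab Hf Hpos.
  destruct (continuity_ab_min (fun y => f (clamp a b y)) a b Hab) as [xm [Hmin Hxm]].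
  { intros c _. apply continuity_pt_filterlim, cont_on_closed_clamp; assumption. }
  rewrite clamp_id in Hmin by exact Hxm.
  exists (f xm). split; [apply Hpos, Hxm|]. intros x Hx.
  specialize (Hmin x Hx). rewrite clamp_id in Hmin by exact Hx. exact Hmin.
Qed.

(** * Maximum principle *)

Definition twice_derivable_on (f df d2f : R -> R) (a b : R) : Prop :=
  forall x, a < x < b -> is_derive f x (df x) /\ is_derive df x (d2f x).

Lemma twice_derivable_on_sub (f df d2f : R -> R) (a b a' b' : R) :
  a <= a' -> b' <= b -> twice_derivable_on f df d2f a b -> twice_derivable_on f df d2f a' b'.
Proof. intros Ha Hb Hf x Hx. apply Hf. lra. Qed.

Lemma twice_derivable_on_scal_plus (f df d2f g dg d2g : R -> R) (k a b : R) :
  twice_derivable_on f df d2f a b ->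
  (forall x, is_derive g x (dg x) /\ is_derive dg x (d2g x)) ->
  twice_derivable_on (fun x => k * f x + g x) (fun x => k * df x + dg x)
    (fun x => k * d2f x + d2g x) a b.
Proof.
  intros Hf Hg x Hx. destruct (Hf x Hx) as [Hf1 Hf2]. destruct (Hg x) as [Hg1 Hg2].
  split; apply (is_derive_plus (fun y => k * _ y)); try apply is_derive_scal; assumption.
Qed.

Lemma is_derive_reflect (f : R -> R) (c x l : R) :
  is_derive f (c - x) l -> is_derive (fun y => f (c - y)) x (- l).
Proof.
  intros Hf. replace (- l) with (scal (-1) l) by (unfold scal; simpl; unfold mult; simpl; ring).
  apply (is_derive_comp f (fun y => c - y)); [exact Hf|].
  auto_derive; [exact I | ring].
Qed.

Lemma twice_derivable_on_reflect (f df d2f : R -> R) (c a b : R) :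
  twice_derivable_on f df d2f (c - b) (c - a) ->
  twice_derivable_on (fun x => f (c - x)) (fun x => - df (c - x)) (fun x => d2f (c - x)) a b.
Proof.
  intros Hf x Hx. destruct (Hf (c - x) ltac:(lra)) as [Hf1 Hf2].
  split; [now apply is_derive_reflect|].
  rewrite <- (Ropp_involutive (d2f (c - x))).
  apply (is_derive_opp (fun y => df (c - y))). now apply is_derive_reflect.
Qed.

Lemma is_derive_interior_max (f : R -> R) (a b c l : R) :
  a < c < b -> is_derive f c l -> (forall x, a < x < b -> f x <= f c) -> l = 0.
Proof.
  intros Hc Hf Hmax. apply is_derive_Reals in Hf.
  rewrite <- (derive_pt_eq_0 f c l (exist _ l Hf) Hf).
  apply (deriv_maximum f a b c); [lra | lra | intros x Hax Hxb; apply Hmax; lra].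
Qed.

Lemma nondecreasing_of_deriv_nonneg (f df : R -> R) (a b : R) : a <= b ->
  (forall x, a <= x <= b -> is_derive f x (df x)) -> (forall x, a < x < b -> 0 <= df x) ->
  f a <= f b.
Proof.
  intros Hab Hf Hdf. destruct (Req_dec a b) as [<-|Hne]; [lra|].
  destruct (MVT_cor2 f df a b ltac:(lra)) as [c [Hc Hcab]].
  { intros x Hx. apply is_derive_Reals, Hf, Hx. }
  assert (0 <= df c * (b - a)) by (apply Rmult_le_pos; [apply Hdf, Hcab | lra]). lra.
Qed.

Lemma cont_on_closed_last_argmax (f : R -> R) (a b : R) : a <= b -> cont_on_closed f a b ->
  exists x1, a <= x1 <= b /\ (forall x, a <= x <= b -> f x <= f x1) /\
    (forall x, x1 < x <= b -> f x < f x1).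
Proof.
  intros Hab Hf. destruct (cont_on_closed_max f a b Hab Hf) as [xm [Hxm Hmax]].
  set (S := fun x => a <= x <= b /\ f x = f xm).
  destruct (completeness S) as [x1 [Hub Hlub]].
  { exists b. intros x [Hx _]. lra. }
  { exists xm. split; [exact Hxm | reflexivity]. }
  assert (Hx1 : a <= x1 <= b).
  { assert (xm <= x1) by (apply Hub; split; [exact Hxm | reflexivity]).
    assert (x1 <= b) by (apply Hlub; intros x [Hx _]; lra). lra. }
  assert (Hfx1 : f x1 = f xm).
  { apply Rle_antisym; [apply Hmax, Hx1|]. apply Rnot_lt_le. intros Hlt.
    rewrite cont_on_closed_eps in Hf.
    destruct (Hf x1 Hx1 (f xm - f x1) ltac:(lra)) as [d [Hd0 Hd]].
    destruct (classic (exists x, S x /\ x1 - d < x)) as [[x [[Hx Hfx] Hxd]] | Hnone].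
    - assert (x <= x1) by (apply Hub; split; assumption).
      specialize (Hd x Hx ltac:(split_Rabs; lra)). split_Rabs; lra.
    - assert (x1 <= x1 - d); [|lra]. apply Hlub. intros x Hx.
      apply Rnot_lt_le. intros Hlt'. apply Hnone. exists x. split; assumption. }
  exists x1. split; [exact Hx1|]. split.
  - intros x Hx. rewrite Hfx1. apply Hmax, Hx.
  - intros x Hx. rewrite Hfx1. destruct (Rle_lt_or_eq_dec (f x) (f xm)) as [|Heq];
      [apply Hmax; lra | assumption |].
    assert (x <= x1) by (apply Hub; split; [lra | exact Heq]). lra.
Qed.

(* At the last maximiser [x1] one has [f' x1 = 0]; if [f x1 > lev], then [f'' >= 0] just to
   the right of [x1], so [f] does not decrease there, contradicting maximality. *)
Lemma max_principle (f df d2f : R -> R) (a b lev : R) :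
  a < b -> cont_on_closed f a b -> twice_derivable_on f df d2f a b ->
  f a <= lev -> f b <= lev -> (forall x, a < x < b -> lev < f x -> 0 <= d2f x) ->
  forall x, a <= x <= b -> f x <= lev.
Proof.
  intros Hab Hf Hd Ha Hb Hconv x Hx. apply Rnot_lt_le. intros Hlev.
  destruct (cont_on_closed_last_argmax f a b ltac:(lra) Hf) as [x1 [Hx1 [Hmax Hlast]]].
  assert (Hfx1 : lev < f x1) by (specialize (Hmax x Hx); lra).
  assert (Hx1' : a < x1 < b).
  { destruct Hx1 as [[Ha1|Ha1] [Hb1|Hb1]]; subst; split; lra. }
  assert (Hdf0 : df x1 = 0).
  { apply (is_derive_interior_max f a b x1); [exact Hx1' | apply Hd, Hx1' |].
    intros y Hy. apply Hmax. lra. }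
  rewrite cont_on_closed_eps in Hf.
  destruct (Hf x1 Hx1 (f x1 - lev) ltac:(lra)) as [d [Hd0 Hclose]].
  set (r := Rmin d (b - x1) / 2).
  assert (Hr : 0 < r /\ r < d /\ r < b - x1).
  { unfold r. pose proof (Rmin_l d (b - x1)). pose proof (Rmin_r d (b - x1)).
    pose proof (Rmin_pos d (b - x1) Hd0 ltac:(lra)). lra. }
  assert (Habove : forall y, x1 <= y <= x1 + r -> lev < f y).
  { intros y Hy. specialize (Hclose y ltac:(lra) ltac:(split_Rabs; lra)). split_Rabs; lra. }
  assert (Hdf : forall y, x1 < y < x1 + r -> 0 <= df y).
  { intros y Hy. rewrite <- Hdf0. apply (nondecreasing_of_deriv_nonneg df d2f); [lra| |].
    - intros z Hz. apply Hd. lra.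
    - intros z Hz. apply Hconv; [lra | apply Habove; lra]. }
  assert (f x1 <= f (x1 + r)).
  { apply (nondecreasing_of_deriv_nonneg f df); [lra | intros z Hz; apply Hd; lra | exact Hdf]. }
  specialize (Hlast (x1 + r) ltac:(lra)). lra.
Qed.

Lemma convex_below_chord (g dg d2g : R -> R) (a b : R) :
  a < b -> cont_on_closed g a b -> twice_derivable_on g dg d2g a b ->
  (forall x, a < x < b -> 0 <= d2g x) ->
  forall x, a <= x <= b -> g x <= g a + (x - a) / (b - a) * (g b - g a).
Proof.
  intros Hab Hc Hd Hconv x Hx.
  set (sl := (g b - g a) / (b - a)).
  assert (H := max_principle (fun y => 1 * g y + - (g a + (y - a) * sl))
    (fun y => 1 * dg y + - sl) (fun y => 1 * d2g y + 0) a b 0 Hab).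
  enough (1 * g x + - (g a + (x - a) * sl) <= 0) by (unfold sl in *; lra).
  apply H; [| | | | | exact Hx].
  - apply cont_on_closed_scal_plus; [exact Hc|]. intros y.
    apply (ex_derive_continuous (fun y => - (g a + (y - a) * sl))). auto_derive. exact I.
  - apply (twice_derivable_on_scal_plus g dg d2g (fun y => - (g a + (y - a) * sl))
      (fun _ => - sl) (fun _ => 0)); [exact Hd|].
    intros y. split; auto_derive; first [exact I | ring].
  - lra.
  - unfold sl. field_simplify; lra.
  - intros y Hy _. specialize (Hconv y Hy). lra.
Qed.

(** * Boundary layers *)

Lemma right_limit_of_nondecreasing (Q : R -> R) (d K : R) : 0 < d ->
  (forall h1 h2, 0 < h1 <= h2 -> h2 <= d -> Q h1 <= Q h2) ->
  (forall h, 0 < h <= d -> K <= Q h) ->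
  exists l, filterlim Q (at_right 0) (locally l) /\ l <= Q d.
Proof.
  intros Hd Hmono Hlow.
  set (E := fun y => exists h, 0 < h <= d /\ y = - Q h).
  destruct (completeness E) as [m [Hub Hlub]].
  { exists (- K). intros y [h [Hh ->]]. specialize (Hlow h Hh). lra. }
  { exists (- Q d), d. split; [lra | reflexivity]. }
  assert (Hinf : forall h, 0 < h <= d -> - m <= Q h).
  { intros h Hh.
    assert (- Q h <= m) by (apply Hub; exists h; split; [exact Hh | reflexivity]). lra. }
  exists (- m). split; [| apply Hinf; lra].
  apply filterlim_locally. intros e.
  destruct (classic (exists h0, 0 < h0 <= d /\ Q h0 < - m + e)) as [[h0 [Hh0 HQh0]] | Hnone].
  - exists (mkposreal h0 (proj1 Hh0)). intros h Hball Hh. change (Rabs (h - 0) < h0) in Hball.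
    change (Rabs (Q h - - m) < e).
    assert (Q h <= Q h0) by (apply Hmono; split_Rabs; lra).
    specialize (Hinf h ltac:(split_Rabs; lra)). split_Rabs; lra.
  - exfalso. assert (m <= m - e); [| pose proof (cond_pos e); lra].
    apply Hlub. intros y [h [Hh ->]]. apply Rnot_lt_le. intros Hlt.
    apply Hnone. exists h. split; [exact Hh | lra].
Qed.

Lemma quadratic_corrected_below_chord (f df d2f : R -> R) (k p d h : R) :
  0 < h <= d -> cont_on_closed f 0 d -> twice_derivable_on f df d2f 0 d ->
  (forall x, 0 < x < d -> 0 <= k * d2f x + p) ->
  forall x, 0 <= x <= h ->
  k * f x + p * x ^ 2 / 2 <= k * f 0 + x / h * (k * f h + p * h ^ 2 / 2 - k * f 0).
Proof.
  intros Hh Hc Hdf Hconv x Hx.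
  replace (k * f 0) with (k * f 0 + p * 0 ^ 2 / 2) by field.
  replace (x / h) with ((x - 0) / (h - 0)) by (rewrite !Rminus_0_r; reflexivity).
  apply (convex_below_chord (fun y => k * f y + p * y ^ 2 / 2)
    (fun y => k * df y + p * y) (fun y => k * d2f y + p));
    [lra | | | intros y Hy; apply Hconv; lra | exact Hx].
  - apply cont_on_closed_scal_plus; [apply (cont_on_closed_sub f 0 d); [lra | lra | exact Hc]|].
    intros y. apply (ex_derive_continuous (fun y => p * y ^ 2 / 2)). auto_derive. exact I.
  - apply (twice_derivable_on_scal_plus f df d2f (fun y => p * y ^ 2 / 2) (fun y => p * y)
      (fun _ => p)); [apply (twice_derivable_on_sub f df d2f 0 d); [lra | lra | exact Hdf]|].
    intros y. split; auto_derive; first [exact I | field].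
Qed.

Lemma is_right_deriv_of_corrected_quotient (f Q : R -> R) (c l : R) :
  (forall h, 0 < h -> (f (0 + h) - f 0) / h = Q h - c * h) ->
  filterlim Q (at_right 0) (locally l) -> is_right_deriv f 0 l.
Proof.
  intros HQ Hlim. apply filterlim_locally. intros e.
  assert (Hc : 0 < Rabs c + 1) by (pose proof (Rabs_pos c); lra).
  assert (Hnear : at_right 0 (fun h => Rabs (Q h - l) < e / 2)).
  { exact (proj1 (filterlim_locally _ _) Hlim (pos_div_2 e)). }
  assert (Hsmall : at_right 0 (fun h => 0 < h /\ Rabs (c * h) < e / 2)).
  { exists (mkposreal (e / 2 / (Rabs c + 1))
      (Rdiv_lt_0_compat (e / 2) _ (cond_pos (pos_div_2 e)) Hc)).
    intros h Hh Hpos. change (Rabs (h - 0) < e / 2 / (Rabs c + 1)) in Hh. split; [exact Hpos|].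
    rewrite Rabs_mult, (Rabs_pos_eq h) by lra.
    apply (Rle_lt_trans _ ((Rabs c + 1) * h)); [apply Rmult_le_compat_r; lra|].
    replace (e / 2) with ((Rabs c + 1) * (e / 2 / (Rabs c + 1))) by (field; lra).
    apply Rmult_lt_compat_l; [lra | split_Rabs; lra]. }
  generalize (filter_and _ _ Hnear Hsmall). apply filter_imp. intros h [Hq [Hpos Hh]].
  change (Rabs ((f (0 + h) - f 0) / h - l) < e). rewrite HQ by exact Hpos.
  split_Rabs; lra.
Qed.

(* Convexity of [f + K x^2 / 2] makes the difference quotient of [f] at [0], corrected by
   [K h / 2], nondecreasing in [h]; convexity of [B x^2 / 2 - f] bounds it from below. *)
Lemma boundary_layer (f df d2f : R -> R) (d K B : R) :
  0 < d -> 0 <= K -> cont_on_closed f 0 d -> twice_derivable_on f df d2f 0 d ->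
  (forall x, 0 < x < d -> - K <= d2f x <= B) -> f d + K * d ^ 2 / 2 < f 0 ->
  (forall x, 0 < x <= d -> f x < f 0) /\
  exists l, is_right_deriv f 0 l /\ l <= (f d - f 0) / d + K * d / 2.
Proof.
  intros Hd HK Hc Hdf Hb Hend.
  assert (Hup : forall h x, 0 < h <= d -> 0 <= x <= h ->
    f x + K * x ^ 2 / 2 <= f 0 + x / h * (f h + K * h ^ 2 / 2 - f 0)).
  { intros h x Hh Hx.
    pose proof (quadratic_corrected_below_chord f df d2f 1 K d h Hh Hc Hdf
      ltac:(intros y Hy; specialize (Hb y Hy); lra) x Hx). lra. }
  set (Q := fun h => (f h - f 0) / h + K * h / 2).
  split.
  { intros x Hx. specialize (Hup d x ltac:(lra) ltac:(lra)).
    assert (x / d * (f d + K * d ^ 2 / 2 - f 0) < 0).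
    { apply Rmult_pos_neg; [apply Rdiv_lt_0_compat|]; lra. }
    assert (0 <= K * x ^ 2) by (apply Rmult_le_pos; [lra | apply pow2_ge_0]). lra. }
  assert (Hmono : forall h1 h2, 0 < h1 <= h2 -> h2 <= d -> Q h1 <= Q h2).
  { intros h1 h2 H12 H2. specialize (Hup h2 h1 ltac:(lra) ltac:(lra)).
    apply (Rmult_le_reg_l h1); [lra|]. unfold Q.
    replace (h1 * ((f h1 - f 0) / h1 + K * h1 / 2)) with (f h1 + K * h1 ^ 2 / 2 - f 0)
      by (field; lra).
    replace (h1 * ((f h2 - f 0) / h2 + K * h2 / 2)) with
      (h1 / h2 * (f h2 + K * h2 ^ 2 / 2 - f 0)) by (field; lra).
    lra. }
  assert (Hlow : forall h, 0 < h <= d -> (f d - f 0) / d - B * d / 2 <= Q h).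
  { intros h Hh. pose proof (quadratic_corrected_below_chord f df d2f (-1) B d d ltac:(lra) Hc Hdf
      ltac:(intros y Hy; specialize (Hb y Hy); lra) h ltac:(lra)) as Hconc.
    assert (HBK : 0 <= (B + K) * h ^ 2).
    { apply Rmult_le_pos; [specialize (Hb (d / 2) ltac:(lra)); lra | apply pow2_ge_0]. }
    apply (Rmult_le_reg_l h); [lra|]. unfold Q.
    replace (h * ((f h - f 0) / h + K * h / 2)) with (f h - f 0 + K * h ^ 2 / 2) by (field; lra).
    replace (h * ((f d - f 0) / d - B * d / 2)) with
      (- (h / d * (-1 * f d + B * d ^ 2 / 2 - -1 * f 0))) by (field; lra).
    lra. }
  destruct (right_limit_of_nondecreasing Q d _ Hd Hmono Hlow) as [l [Hlim Hld]].
  exists l. split; [| exact Hld].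
  apply (is_right_deriv_of_corrected_quotient f Q (K / 2)); [| exact Hlim].
  intros h Hh. unfold Q. rewrite Rplus_0_l. field. lra.
Qed.

(** * Estimates for solutions with values in [[0, 1]] *)

Lemma exp_le_compat (x y : R) : x <= y -> exp x <= exp y.
Proof. intros [Hlt | ->]; [left; apply exp_increasing, Hlt | right; reflexivity]. Qed.

Lemma one_le_exp (x : R) : 0 <= x -> 1 <= exp x.
Proof. intros Hx. pose proof (exp_ineq1_le x). lra. Qed.

Lemma exp_neg_le_inv (y : R) : 0 < y -> exp (- y) <= / y.
Proof.
  intros Hy. rewrite exp_Ropp. apply Rinv_le_contravar; [exact Hy|].
  pose proof (exp_ineq1_le y). lra.
Qed.

Definition exp_barrier (k a c x : R) : R := exp (- k * (x - a)) + exp (k * (x - c)).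

Lemma exp_barrier_derivs (k a c x : R) :
  is_derive (exp_barrier k a c) x (- k * exp (- k * (x - a)) + k * exp (k * (x - c))) /\
  is_derive (fun y => - k * exp (- k * (y - a)) + k * exp (k * (y - c))) x
    (k ^ 2 * exp_barrier k a c x).
Proof. unfold exp_barrier. split; auto_derive; try exact I; unfold Rminus; ring. Qed.

Lemma le_exp_barrier (f df d2f : R -> R) (k a c : R) :
  a < c -> cont_on_closed f a c -> twice_derivable_on f df d2f a c ->
  f a <= 1 -> f c <= 1 -> (forall x, a < x < c -> k ^ 2 * f x <= d2f x) ->
  forall x, a <= x <= c -> f x <= exp_barrier k a c x.
Proof.
  intros Hac Hc Hd Ha Hb Hconv x Hx.
  enough (1 * f x + - exp_barrier k a c x <= 0) by lra.
  apply (max_principle (fun y => 1 * f y + - exp_barrier k a c y)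
    (fun y => 1 * df y + - (- k * exp (- k * (y - a)) + k * exp (k * (y - c))))
    (fun y => 1 * d2f y + - (k ^ 2 * exp_barrier k a c y)) a c 0 Hac); [| | | | | exact Hx].
  - apply cont_on_closed_scal_plus; [exact Hc|]. intros y.
    apply (ex_derive_continuous (fun y => - exp_barrier k a c y)).
    unfold exp_barrier. auto_derive. exact I.
  - apply (twice_derivable_on_scal_plus f df d2f); [exact Hd|]. intros y.
    destruct (exp_barrier_derivs k a c y) as [H1 H2].
    split; [exact (is_derive_opp _ _ _ H1) | exact (is_derive_opp _ _ _ H2)].
  - unfold exp_barrier. rewrite Rminus_diag, Rmult_0_r, exp_0.
    pose proof (exp_pos (k * (a - c))). lra.
  - unfold exp_barrier. rewrite Rminus_diag, Rmult_0_r, exp_0.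
    pose proof (exp_pos (- k * (c - a))). lra.
  - intros y Hy Hpos. specialize (Hconv y Hy).
    assert (0 <= k ^ 2 * (f y - exp_barrier k a c y))
      by (apply Rmult_le_pos; [apply pow2_ge_0 | lra]).
    lra.
Qed.

Lemma exp_barrier_at_margin (k d L x : R) : 0 < k -> 0 < d -> 2 * d <= L ->
  x = d \/ x = L - d -> exp_barrier k (d / 2) (L - d / 2) x <= 4 / (k * d).
Proof.
  intros Hk Hd HL Hx.
  assert (Hexp : forall z, z <= - (k * d / 2) -> exp z <= 2 / (k * d)).
  { intros z Hz. replace (2 / (k * d)) with (/ (k * d / 2)) by (field; lra).
    apply (Rle_trans _ (exp (- (k * d / 2))));
      [apply exp_le_compat, Hz | apply exp_neg_le_inv; nra]. }
  unfold exp_barrier. replace (4 / (k * d)) with (2 / (k * d) + 2 / (k * d)) by (unfold Rdiv; ring).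
  destruct Hx as [-> | ->]; apply Rplus_le_compat; apply Hexp; nra.
Qed.

Lemma is_left_deriv_of_reflect (f : R -> R) (c l : R) :
  is_right_deriv (fun x => f (c - x)) 0 l -> is_left_deriv f c (- l).
Proof.
  intros Hr. unfold is_left_deriv.
  apply (filterlim_ext_loc (fun h => - ((f (c - (0 + - h)) - f (c - 0)) / - h))).
  { exists (mkposreal 1 Rlt_0_1). intros h _ Hh.
    replace (c - (0 + - h)) with (c + h) by ring. rewrite Rminus_0_r. field. lra. }
  apply (filterlim_comp _ _ _ (fun h => (f (c - (0 + - h)) - f (c - 0)) / - h) Ropp _ (locally l));
    [| exact (filterlim_opp (V := R_NormedModule) l)].
  apply (filterlim_comp _ _ _ Ropp (fun h => (f (c - (0 + h)) - f (c - 0)) / h) _ (at_right 0));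
    [| exact Hr].
  rewrite <- Ropp_0 at 2. apply filterlim_Ropp_left.
Qed.

Lemma chord_slope_lt (A C d p : R) :
  0 < A <= 1 -> 0 < C -> 0 < d <= A / (4 * C + 4) -> p <= A / 4 -> (p - A) / d + d / 8 < - C.
Proof.
  intros HA HC Hd Hp.
  assert (HAd : 4 * C + 4 <= A / d).
  { apply (Rmult_le_reg_r d); [lra|]. replace (A / d * d) with A by (field; lra).
    apply (Rle_trans _ ((4 * C + 4) * (A / (4 * C + 4))));
      [apply Rmult_le_compat_l; lra | right; field; lra]. }
  assert (Hd1 : d <= 1).
  { apply (Rle_trans _ (A / (4 * C + 4))); [lra|].
    apply (Rmult_le_reg_r (4 * C + 4)); [lra|].
    replace (A / (4 * C + 4) * (4 * C + 4)) with A by (field; lra). lra. }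
  assert ((p - A) / d <= - (3 / 4) * (A / d)).
  { unfold Rdiv. rewrite <- Rmult_assoc.
    apply Rmult_le_compat_r; [apply Rlt_le, Rinv_0_lt_compat | ]; lra. }
  lra.
Qed.

Section APriori.

Variables (L b Mphi A : R) (phi psi dpsi : R -> R).
Hypotheses (HL : 0 < L) (Hb : 0 <= b) (Hphi : forall x, 0 <= x <= L -> 0 <= phi x <= Mphi).
Hypotheses (Hcont : cont_on_closed psi 0 L)
  (Hderiv : twice_derivable_on psi dpsi (fun x => - (psi x * (1 - b * phi x - psi x))) 0 L)
  (H01 : forall x, 0 <= x <= L -> 0 <= psi x <= 1)
  (Hpsi0 : psi 0 = A) (HpsiL : psi L = A).

Lemma solution_second_deriv_bounds (x : R) : 0 < x < L ->
  - 1 / 4 <= - (psi x * (1 - b * phi x - psi x)) <= b * Mphi.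
Proof.
  intros Hx. destruct (H01 x ltac:(lra)). destruct (Hphi x ltac:(lra)).
  assert (0 <= b * phi x <= b * Mphi)
    by (split; [apply Rmult_le_pos | apply Rmult_le_compat_l]; lra).
  replace (- (psi x * (1 - b * phi x - psi x))) with
    (psi x * (b * phi x) + (psi x - 1 / 2) ^ 2 - 1 / 4) by field.
  assert (0 <= psi x * (b * phi x) <= b * phi x) by (split; nra).
  assert (0 <= psi x * (1 - psi x)) by (apply Rmult_le_pos; lra).
  assert (0 <= (psi x - 1 / 2) ^ 2 <= 1 / 4) by (split; [apply pow2_ge_0 | nra]).
  lra.
Qed.

Lemma solution_second_deriv_ge (m k a c : R) : 0 <= a -> c <= L ->
  (forall x, a <= x <= c -> m <= phi x) -> k ^ 2 <= b * m - 1 ->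
  forall x, a < x < c -> k ^ 2 * psi x <= - (psi x * (1 - b * phi x - psi x)).
Proof.
  intros Ha Hc Hm Hk x Hx. destruct (H01 x ltac:(lra)).
  assert (b * m <= b * phi x) by (apply Rmult_le_compat_l; [lra | apply Hm; lra]).
  nra.
Qed.

Lemma solution_small_inside (m k d : R) : 0 < k -> 0 < d -> 4 * d <= L ->
  (forall x, d / 2 <= x <= L - d / 2 -> m <= phi x) -> k ^ 2 <= b * m - 1 ->
  forall x, d <= x <= L - d -> psi x <= 4 / (k * d).
Proof.
  intros Hk Hd HdL Hm Hkm.
  assert (Hedge : forall x, x = d \/ x = L - d -> psi x <= 4 / (k * d)).
  { intros x Hx. apply (Rle_trans _ (exp_barrier k (d / 2) (L - d / 2) x));
      [| apply exp_barrier_at_margin; lra].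
    apply (le_exp_barrier psi dpsi (fun x => - (psi x * (1 - b * phi x - psi x))));
      [lra | apply (cont_on_closed_sub psi 0 L); [lra | lra | exact Hcont]
      | apply (twice_derivable_on_sub _ _ _ 0 L); [lra | lra | exact Hderiv]
      | apply H01; lra | apply H01; lra
      | apply (solution_second_deriv_ge m); [lra | lra | exact Hm | exact Hkm]
      | destruct Hx; lra]. }
  apply (max_principle psi dpsi (fun x => - (psi x * (1 - b * phi x - psi x))));
    [lra | apply (cont_on_closed_sub psi 0 L); [lra | lra | exact Hcont]
    | apply (twice_derivable_on_sub _ _ _ 0 L); [lra | lra | exact Hderiv]
    | apply Hedge; auto | apply Hedge; auto |].
  intros x Hx _.
  pose proof (solution_second_deriv_ge m k (d / 2) (L - d / 2) ltac:(lra) ltac:(lra) Hm Hkm x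
    ltac:(lra)).
  assert (0 <= k ^ 2 * psi x) by (apply Rmult_le_pos; [apply pow2_ge_0 | apply H01; lra]). lra.
Qed.

Lemma solution_boundary_estimates (C m d : R) :
  0 < A <= 1 -> 0 < C -> 0 < d -> 4 * d <= L -> d <= A / (4 * C + 4) ->
  (forall x, d / 2 <= x <= L - d / 2 -> m <= phi x) -> (16 / (A * d)) ^ 2 <= b * m - 1 ->
  (forall x, 0 < x < L -> psi x < A) /\
  (exists d0, is_right_deriv psi 0 d0 /\ d0 < - C) /\
  (exists dL, is_left_deriv psi L dL /\ C < dL).
Proof.
  intros HA HC Hd HdL HdC Hm Hkm.
  set (d2 := fun x => - (psi x * (1 - b * phi x - psi x))) in Hderiv.
  (* [k = 16 / (A d)] turns the barrier bound [4 / (k d)] into [A / 4]. *)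
  assert (Hmid : forall x, d <= x <= L - d -> psi x <= A / 4).
  { intros x Hx. replace (A / 4) with (4 / (16 / (A * d) * d)) by (field; lra).
    apply (solution_small_inside m);
      [apply Rdiv_lt_0_compat; nra | lra | lra | exact Hm | exact Hkm | exact Hx]. }
  assert (Hd2 : forall x, 0 < x < L -> - (1 / 4) <= d2 x <= b * Mphi).
  { intros x Hx. pose proof (solution_second_deriv_bounds x Hx). unfold d2. lra. }
  assert (HdA : d <= A / 4).
  { apply (Rle_trans _ (A / (4 * C + 4))); [lra|]. apply Rmult_le_compat_l; [lra|].
    apply Rinv_le_contravar; lra. }
  assert (Hlayer : forall p, p <= A / 4 -> p + 1 / 4 * d ^ 2 / 2 < A) by (intros; nra).
  destruct (boundary_layer psi dpsi d2 d (1 / 4) (b * Mphi)) as [Hleft [l [Hl Hlb]]];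
    [lra | lra | apply (cont_on_closed_sub psi 0 L); [lra | lra | exact Hcont]
    | apply (twice_derivable_on_sub _ _ _ 0 L); [lra | lra | exact Hderiv]
    | intros x Hx; apply Hd2; lra | rewrite Hpsi0; apply Hlayer, Hmid; lra |].
  destruct (boundary_layer (fun x => psi (L - x)) (fun x => - dpsi (L - x)) (fun x => d2 (L - x))
    d (1 / 4) (b * Mphi)) as [Hright [r [Hr Hrb]]];
    [lra | lra
    | apply cont_on_closed_reflect, (cont_on_closed_sub psi 0 L); [lra | lra | exact Hcont]
    | apply twice_derivable_on_reflect, (twice_derivable_on_sub _ _ _ 0 L);
      [lra | lra | exact Hderiv]
    | intros x Hx; apply Hd2; lra
    | rewrite Rminus_0_r, HpsiL; apply Hlayer, Hmid; lra |].
  rewrite Rminus_0_r, HpsiL in *. rewrite Hpsi0 in *.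
  split; [| split].
  - intros x Hx. destruct (Rle_lt_dec x d); [apply Hleft; lra|].
    destruct (Rle_lt_dec (L - d) x) as [Hx'|Hx'].
    + specialize (Hright (L - x) ltac:(lra)).
      replace (L - (L - x)) with x in Hright by ring. exact Hright.
    + pose proof (Hmid x ltac:(lra)). lra.
  - exists l. split; [exact Hl|].
    pose proof (chord_slope_lt A C d (psi d) HA HC ltac:(lra) (Hmid d ltac:(lra))). lra.
  - exists (- r). split; [apply is_left_deriv_of_reflect, Hr|].
    pose proof (chord_slope_lt A C d (psi (L - d)) HA HC ltac:(lra) (Hmid (L - d) ltac:(lra))). lra.
Qed.

End APriori.

(** * Existence by shooting *)

Definition prim (h : R -> R) (x : R) : R := RInt h 0 x.

Lemma ex_RInt_of_continuous (h : R -> R) (a b : R) :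
  (forall t, continuous h t) -> ex_RInt h a b.
Proof.
  intros Hh. apply (ex_RInt_continuous (V := R_CompleteNormedModule)). intros t _. apply Hh.
Qed.

Lemma is_derive_prim (h : R -> R) (x : R) :
  (forall t, continuous h t) -> is_derive (prim h) x (h x).
Proof.
  intros Hh. apply (is_derive_RInt h (prim h) 0 x); [| apply Hh].
  exists (mkposreal 1 Rlt_0_1). intros y _.
  apply (RInt_correct (V := R_CompleteNormedModule)), ex_RInt_of_continuous, Hh.
Qed.

Lemma continuous_prim (h : R -> R) (x : R) :
  (forall t, continuous h t) -> continuous (prim h) x.
Proof.
  intros Hh. apply (ex_derive_continuous (V := R_NormedModule)). eexists. apply is_derive_prim, Hh.
Qed.

Lemma prim_0 (h : R -> R) : prim h 0 = 0.
Proof. exact (RInt_point (V := R_CompleteNormedModule) 0 h). Qed.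

Lemma prim_minus (h1 h2 : R -> R) (x : R) :
  (forall t, continuous h1 t) -> (forall t, continuous h2 t) ->
  prim h1 x - prim h2 x = prim (fun t => h1 t - h2 t) x.
Proof.
  intros H1 H2. unfold prim.
  rewrite (RInt_minus (V := R_CompleteNormedModule) h1 h2);
    [reflexivity | apply ex_RInt_of_continuous; assumption ..].
Qed.

Lemma abs_prim_le (h : R -> R) (K x : R) : 0 <= x -> (forall t, continuous h t) ->
  (forall t, 0 <= t <= x -> Rabs (h t) <= K) -> Rabs (prim h x) <= x * K.
Proof.
  intros Hx Hh Hb. rewrite <- (Rminus_0_r x) at 2.
  apply abs_RInt_le_const; [exact Hx | apply ex_RInt_of_continuous, Hh | exact Hb].
Qed.

Lemma RInt_exp (c x : R) : 0 < c -> RInt (fun t => exp (c * t)) 0 x = (exp (c * x) - 1) / c.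
Proof.
  intros Hc. apply is_RInt_unique.
  replace ((exp (c * x) - 1) / c) with (minus (exp (c * x) / c) (exp (c * 0) / c))
    by (unfold minus, plus, opp; simpl; rewrite Rmult_0_r, exp_0; field; lra).
  apply (is_RInt_derive (fun t => exp (c * t) / c)).
  - intros t _. auto_derive; [exact I | field; lra].
  - intros t _. apply (ex_derive_continuous (V := R_NormedModule)). auto_derive. exact I.
Qed.

Lemma abs_prim_le_exp (h : R -> R) (K c x : R) : 0 < c -> 0 <= x -> (forall t, continuous h t) ->
  (forall t, 0 <= t <= x -> Rabs (h t) <= K * exp (c * t)) ->
  Rabs (prim h x) <= K / c * exp (c * x).
Proof.
  intros Hc Hx Hh Hb.
  assert (HK : 0 <= K).
  { specialize (Hb 0 ltac:(lra)). rewrite Rmult_0_r, exp_0 in Hb.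
    pose proof (Rabs_pos (h 0)). lra. }
  assert (Hexp : forall t, continuous (fun t => K * exp (c * t)) t).
  { intros t. apply (ex_derive_continuous (V := R_NormedModule)). auto_derive. exact I. }
  apply (Rle_trans _ (RInt (fun t => K * exp (c * t)) 0 x)).
  - eapply Rle_trans; [apply abs_RInt_le; [exact Hx | apply ex_RInt_of_continuous, Hh]|].
    apply RInt_le; [exact Hx | | apply ex_RInt_of_continuous, Hexp | intros t Ht; apply Hb; lra].
    apply ex_RInt_of_continuous. intros t. apply continuous_Rabs_comp, Hh.
  - rewrite (RInt_scal (V := R_CompleteNormedModule) (fun t => exp (c * t)));
      [| apply ex_RInt_of_continuous; intros t; apply (ex_derive_continuous (V := R_NormedModule));
         auto_derive; exact I].
    unfold scal; simpl; unfold mult; simpl. rewrite RInt_exp by exact Hc.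
    replace (K / c * exp (c * x)) with (K * (exp (c * x) / c)) by (field; lra).
    apply Rmult_le_compat_l; [exact HK|].
    apply Rmult_le_compat_r; [apply Rlt_le, Rinv_0_lt_compat, Hc | lra].
Qed.

Lemma le_of_le_geometric (x y K : R) : (forall n, x <= y + K * (/ 2) ^ n) -> x <= y.
Proof.
  intros H.
  assert (Hlim : is_lim_seq (fun n => y + K * (/ 2) ^ n) (y + K * 0)).
  { apply is_lim_seq_plus'; [apply is_lim_seq_const|].
    apply (is_lim_seq_scal_l _ K 0). apply is_lim_seq_geom. rewrite Rabs_pos_eq; lra. }
  rewrite Rmult_0_r, Rplus_0_r in Hlim.
  exact (is_lim_seq_le (fun _ => x) _ x y H (is_lim_seq_const x) Hlim).
Qed.

Lemma geometric_small (K e : R) : 0 < e -> exists n, K * (/ 2) ^ n < e.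
Proof.
  intros He. apply not_all_not_ex. intros Hnone.
  assert (e <= 0); [| lra].
  apply (le_of_le_geometric e 0 K). intros n. specialize (Hnone n). lra.
Qed.

Lemma Lim_seq_geometric (u : nat -> R) (K : R) :
  (forall n, Rabs (u (S n) - u n) <= K * (/ 2) ^ n) ->
  forall n, Rabs (real (Lim_seq u) - u n) <= 2 * K * (/ 2) ^ n.
Proof.
  intros Hstep.
  assert (Htele : forall n k, Rabs (u (n + k)%nat - u n) <= 2 * K * (/ 2) ^ n * (1 - (/ 2) ^ k)).
  { intros n k. induction k as [|k IHk].
    - rewrite Nat.add_0_r, Rminus_diag, Rabs_R0. simpl. lra.
    - rewrite Nat.add_succ_r.
      replace (u (S (n + k)) - u n) with ((u (S (n + k)) - u (n + k)%nat) + (u (n + k)%nat - u n))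
        by ring.
      eapply Rle_trans; [apply Rabs_triang|].
      pose proof (Hstep (n + k)%nat) as Hs. rewrite pow_add in Hs. simpl. lra. }
  assert (HK : 0 <= K).
  { specialize (Hstep 0%nat). simpl in Hstep. pose proof (Rabs_pos (u 1%nat - u 0%nat)). lra. }
  assert (Hcauchy : forall n m, (n <= m)%nat -> Rabs (u m - u n) <= 2 * K * (/ 2) ^ n).
  { intros n m Hnm. replace m with (n + (m - n))%nat by lia.
    eapply Rle_trans; [apply Htele|].
    assert (0 <= 2 * K * (/ 2) ^ n) by (apply Rmult_le_pos; [lra | apply pow_le; lra]).
    assert (0 <= (/ 2) ^ (m - n)) by (apply pow_le; lra). nra. }
  destruct (proj2 (ex_lim_seq_cauchy_corr u)) as [l Hl].
  { intros e. destruct (geometric_small (4 * K) e (cond_pos e)) as [N HN].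
    exists N. intros n m Hn Hm.
    pose proof (Hcauchy N n Hn). pose proof (Hcauchy N m Hm). split_Rabs; lra. }
  intros n. rewrite (is_lim_seq_unique u l Hl). simpl.
  apply (is_lim_seq_le_loc (fun m => Rabs (u m - u n)) (fun _ => 2 * K * (/ 2) ^ n)
    (Rabs (l - u n)) (2 * K * (/ 2) ^ n)).
  - exists n. intros m Hm. apply Hcauchy, Hm.
  - apply (is_lim_seq_abs _ (l - u n)), is_lim_seq_minus'; [exact Hl | apply is_lim_seq_const].
  - apply is_lim_seq_const.
Qed.

Lemma continuous_of_geometric_approx (u : nat -> R -> R) (U : R -> R) (K x : R) :
  (forall n, continuous (u n) x) -> (forall n y, Rabs (U y - u n y) <= K * (/ 2) ^ n) ->
  continuous U x.
Proof.
  intros Hu Happrox. apply continuous_eps. intros e He.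
  destruct (geometric_small K (e / 3) ltac:(lra)) as [n Hn].
  destruct (proj1 (continuous_eps _ _) (Hu n) (e / 3) ltac:(lra)) as [d [Hd Hclose]].
  exists d. split; [exact Hd|]. intros y Hy.
  specialize (Hclose y Hy). pose proof (Happrox n x). pose proof (Happrox n y).
  split_Rabs; lra.
Qed.

(* In the weighted sup norm [sup (d / g)], [d <= A0 + |d| / 2] forces [|d| <= 2 A0]; the
   crude bound [Bd] stands in for finiteness of the norm. *)
Lemma le_of_half_contraction (d g : R -> R) (P : R -> Prop) (A0 Bd : R) :
  0 <= A0 -> 0 <= Bd -> (forall t, P t -> 1 <= g t) -> (forall t, P t -> d t <= Bd) ->
  (forall E, (forall t, P t -> d t <= E * g t) -> forall t, P t -> d t <= A0 + E / 2 * g t) ->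
  forall t, P t -> d t <= 2 * A0 * g t.
Proof.
  intros HA HB Hg Hd Hstep.
  assert (Hiter : forall n t, P t -> d t <= (2 * A0 + Bd * (/ 2) ^ n) * g t).
  { induction n as [|n IHn]; intros t Ht; specialize (Hg t Ht).
    - simpl. specialize (Hd t Ht). nra.
    - apply (Rle_trans _ (A0 + (2 * A0 + Bd * (/ 2) ^ n) / 2 * g t)); [apply Hstep; assumption|].
      simpl. nra. }
  intros t Ht. apply (le_of_le_geometric _ _ (Bd * g t)). intros n.
  specialize (Hiter n t Ht). lra.
Qed.

Section Existence.

Variables (L b Mphi : R) (phi : R -> R).
Hypotheses (HL : 0 < L) (Hb : 0 <= b) (Hphi_cont : cont_on_closed phi 0 L)
  (Hphi : forall x, 0 <= x <= L -> 0 <= phi x <= Mphi).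

(* Truncating [u] to [[0, 1]] makes the nonlinearity globally Lipschitz without changing it
   along solutions with values in [[0, 1]]. *)
Definition rhs (t u : R) : R := - clamp 0 1 u * (1 - b * phi (clamp 0 L t) - clamp 0 1 u).

Lemma continuous_rhs (w : R -> R) (x : R) : continuous w x -> continuous (fun t => rhs t (w t)) x.
Proof.
  intros Hw. unfold rhs.
  assert (Hu : continuous (fun t => clamp 0 1 (w t)) x).
  { apply (continuous_comp w (clamp 0 1)); [exact Hw | apply continuous_clamp; lra]. }
  assert (Hp : continuous (fun t => phi (clamp 0 L t)) x)
    by (apply cont_on_closed_clamp; lra || assumption).
  apply (continuous_mult (fun t => - clamp 0 1 (w t))
    (fun t => 1 - b * phi (clamp 0 L t) - clamp 0 1 (w t))).
  - apply (continuous_opp (fun t => clamp 0 1 (w t))), Hu.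
  - apply (continuous_minus (fun t => 1 - b * phi (clamp 0 L t))); [| exact Hu].
    apply (continuous_minus (fun _ => 1)); [apply continuous_const|].
    apply (continuous_scal_r b (fun t => phi (clamp 0 L t))), Hp.
Qed.

Lemma b_Mphi_nonneg : 0 <= b * Mphi.
Proof. apply Rmult_le_pos; [exact Hb | pose proof (Hphi 0 ltac:(lra)); lra]. Qed.

Lemma b_phi_clamp_bounds (t : R) : 0 <= b * phi (clamp 0 L t) <= b * Mphi.
Proof.
  pose proof (Hphi (clamp 0 L t) (clamp_in 0 L t ltac:(lra))).
  split; [apply Rmult_le_pos | apply Rmult_le_compat_l]; lra.
Qed.

Lemma rhs_bound (t u : R) : Rabs (rhs t u) <= 2 + b * Mphi.
Proof.
  unfold rhs. pose proof (clamp_in 0 1 u ltac:(lra)). pose proof (b_phi_clamp_bounds t).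
  rewrite Rabs_mult, Rabs_Ropp.
  replace (2 + b * Mphi) with (1 * (2 + b * Mphi)) by ring.
  apply Rmult_le_compat; try apply Rabs_pos; split_Rabs; lra.
Qed.

Lemma rhs_lipschitz (t u v : R) : Rabs (rhs t u - rhs t v) <= (3 + b * Mphi) * Rabs (u - v).
Proof.
  unfold rhs. pose proof (clamp_in 0 1 u ltac:(lra)). pose proof (clamp_in 0 1 v ltac:(lra)).
  pose proof (clamp_lipschitz 0 1 u v ltac:(lra)). pose proof (b_phi_clamp_bounds t).
  replace (- clamp 0 1 u * (1 - b * phi (clamp 0 L t) - clamp 0 1 u) -
           - clamp 0 1 v * (1 - b * phi (clamp 0 L t) - clamp 0 1 v)) with
    ((clamp 0 1 u - clamp 0 1 v) * (b * phi (clamp 0 L t) + clamp 0 1 u + clamp 0 1 v - 1)) by ring.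
  rewrite Rabs_mult, Rmult_comm.
  apply Rmult_le_compat; try apply Rabs_pos; [split_Rabs; lra | assumption].
Qed.

(* [x] is clamped to [[0, L]] so that all iterates are globally bounded. *)
Definition picard (a s : R) (w : R -> R) (x : R) : R :=
  a + s * clamp 0 L x + prim (prim (fun t => rhs t (w t))) (clamp 0 L x).

Lemma is_derive_affine_plus_prim2 (h : R -> R) (a s x : R) : (forall t, continuous h t) ->
  is_derive (fun y => a + s * y + prim (prim h) y) x (s + prim h x).
Proof.
  intros Hh. apply (is_derive_plus (fun y => a + s * y) (prim (prim h))).
  - auto_derive; [exact I | ring].
  - apply is_derive_prim. intros t. apply continuous_prim, Hh.
Qed.

Lemma continuous_picard (a s : R) (w : R -> R) (x : R) :
  (forall t, continuous w t) -> continuous (picard a s w) x.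
Proof.
  intros Hw. apply (continuous_comp (clamp 0 L) (fun y => a + s * y + prim (prim _) y));
    [apply continuous_clamp; lra|].
  apply (ex_derive_continuous (V := R_NormedModule)). eexists.
  apply is_derive_affine_plus_prim2. intros t. apply continuous_rhs, Hw.
Qed.

Lemma picard_affine_bound (a s : R) (w : R -> R) (x : R) : (forall t, continuous w t) ->
  Rabs (picard a s w x - (a + s * clamp 0 L x)) <= L ^ 2 * (2 + b * Mphi).
Proof.
  intros Hw. unfold picard. pose proof (clamp_in 0 L x ltac:(lra)) as HX.
  set (X := clamp 0 L x) in *. set (h := fun t => rhs t (w t)).
  assert (Hh : forall t, continuous h t) by (intros t; apply continuous_rhs, Hw).
  assert (HB : 0 <= 2 + b * Mphi) by (pose proof b_Mphi_nonneg; lra).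
  replace (a + s * X + prim (prim h) X - (a + s * X)) with (prim (prim h) X) by ring.
  apply (Rle_trans _ (X * (L * (2 + b * Mphi)))).
  2: { replace (L ^ 2 * (2 + b * Mphi)) with (L * (L * (2 + b * Mphi))) by ring.
       apply Rmult_le_compat_r; [apply Rmult_le_pos |]; lra. }
  apply abs_prim_le; [lra | intros t; apply continuous_prim, Hh |].
  intros t Ht. apply (Rle_trans _ (t * (2 + b * Mphi))); [| apply Rmult_le_compat_r; lra].
  apply abs_prim_le; [lra | exact Hh | intros; apply rhs_bound].
Qed.

(* With the weight [exp (c t)], [c = 4 + b Mphi], the Picard map is a [1/2]-contraction
   because [c^2 >= 2 (3 + b Mphi)], twice the Lipschitz constant of [rhs]. *)
Lemma picard_contraction (a s1 s2 : R) (w1 w2 : R -> R) (E x : R) :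
  (forall t, continuous w1 t) -> (forall t, continuous w2 t) ->
  (forall t, 0 <= t <= L -> Rabs (w1 t - w2 t) <= E * exp ((4 + b * Mphi) * t)) ->
  Rabs (picard a s1 w1 x - picard a s2 w2 x) <=
    Rabs (s1 - s2) * L + E / 2 * exp ((4 + b * Mphi) * clamp 0 L x).
Proof.
  intros Hw1 Hw2 HE. unfold picard. pose proof (clamp_in 0 L x ltac:(lra)) as HX.
  set (X := clamp 0 L x) in *. set (c := 4 + b * Mphi) in *.
  set (h1 := fun t => rhs t (w1 t)). set (h2 := fun t => rhs t (w2 t)).
  assert (Hh1 : forall t, continuous h1 t) by (intros t; apply continuous_rhs, Hw1).
  assert (Hh2 : forall t, continuous h2 t) by (intros t; apply continuous_rhs, Hw2).
  assert (Hc : 3 + b * Mphi + 1 = c) by (unfold c; ring).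
  assert (Hlip : 0 < 3 + b * Mphi) by (pose proof b_Mphi_nonneg; lra).
  assert (HE0 : 0 <= E).
  { specialize (HE 0 ltac:(lra)). rewrite Rmult_0_r, exp_0 in HE.
    pose proof (Rabs_pos (w1 0 - w2 0)). lra. }
  assert (Hdiff : forall y, prim (prim h1) y - prim (prim h2) y =
                            prim (fun z => prim (fun t => h1 t - h2 t) z) y).
  { intros y. rewrite prim_minus by (intros t; apply continuous_prim; assumption).
    unfold prim at 1 4. apply RInt_ext. intros z _. apply prim_minus; assumption. }
  replace (a + s1 * X + prim (prim h1) X - (a + s2 * X + prim (prim h2) X)) with
    ((s1 - s2) * X + (prim (prim h1) X - prim (prim h2) X)) by ring.
  rewrite Hdiff. eapply Rle_trans; [apply Rabs_triang|]. apply Rplus_le_compat.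
  { rewrite Rabs_mult, (Rabs_pos_eq X) by lra. apply Rmult_le_compat_l; [apply Rabs_pos | lra]. }
  apply (Rle_trans _ ((3 + b * Mphi) * E / c / c * exp (c * X))).
  - apply abs_prim_le_exp; [lra | lra | intros z; apply continuous_prim; intros t;
      apply (continuous_minus h1 h2); auto |].
    intros z Hz.
    apply abs_prim_le_exp; [lra | lra | intros t; apply (continuous_minus h1 h2); auto |].
    intros t Ht. unfold h1, h2. eapply Rle_trans; [apply rhs_lipschitz|].
    rewrite Rmult_assoc. apply Rmult_le_compat_l; [lra | apply HE; lra].
  - apply Rmult_le_compat_r; [apply Rlt_le, exp_pos|].
    apply (Rmult_le_reg_r (c * c)); [nra|].
    replace ((3 + b * Mphi) * E / c / c * (c * c)) with ((3 + b * Mphi) * E) by (field; lra).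
    rewrite <- Hc. set (l := 3 + b * Mphi).
    assert (0 <= E * (l ^ 2 + 1)) by (apply Rmult_le_pos; [lra | pose proof (pow2_ge_0 l); lra]).
    replace (E / 2 * ((l + 1) * (l + 1))) with (l * E + E * (l ^ 2 + 1) / 2) by field. lra.
Qed.

Fixpoint picard_iter (a s : R) (n : nat) : R -> R :=
  match n with
  | O => fun _ => a
  | S n => picard a s (picard_iter a s n)
  end.

Lemma continuous_picard_iter (a s : R) (n : nat) (x : R) : continuous (picard_iter a s n) x.
Proof.
  revert x. induction n as [|n IHn]; intros x; simpl.
  - apply continuous_const.
  - apply continuous_picard, IHn.
Qed.

Lemma exp_weight_bounds (t : R) :
  1 <= exp ((4 + b * Mphi) * clamp 0 L t) <= exp ((4 + b * Mphi) * L).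
Proof.
  pose proof (clamp_in 0 L t ltac:(lra)).
  pose proof b_Mphi_nonneg.
  split; [apply one_le_exp | apply exp_le_compat]; nra.
Qed.

Lemma picard_iter_geometric (a s : R) : exists K, forall n x,
  Rabs (picard_iter a s (S n) x - picard_iter a s n x) <= K * (/ 2) ^ n.
Proof.
  set (D := Rabs s * L + L ^ 2 * (2 + b * Mphi)).
  assert (Hstep : forall n x, Rabs (picard_iter a s (S n) x - picard_iter a s n x) <=
                    D * (/ 2) ^ n * exp ((4 + b * Mphi) * clamp 0 L x)).
  { induction n as [|n IHn]; intros x; pose proof (exp_weight_bounds x) as [Hw _].
    - simpl.
      pose proof (picard_affine_bound a s (fun _ => a) x ltac:(intros; apply continuous_const)).
      pose proof (clamp_in 0 L x ltac:(lra)).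
      assert (Rabs (s * clamp 0 L x) <= Rabs s * L).
      { rewrite Rabs_mult, (Rabs_pos_eq (clamp 0 L x)) by lra.
        apply Rmult_le_compat_l; [apply Rabs_pos | lra]. }
      assert (HD : Rabs (picard a s (fun _ => a) x - a) <= D) by (unfold D; split_Rabs; lra).
      rewrite Rmult_1_r. pose proof (Rabs_pos (picard a s (fun _ => a) x - a)). nra.
    - change (picard_iter a s (S (S n))) with (picard a s (picard_iter a s (S n))).
      change (picard_iter a s (S n)) with (picard a s (picard_iter a s n)) at 2.
      eapply Rle_trans; [apply (picard_contraction a s s _ _ (D * (/ 2) ^ n));
        [intros; apply continuous_picard_iter .. |] |].
      + intros t Ht. specialize (IHn t). rewrite clamp_id in IHn by exact Ht. exact IHn.
      + rewrite Rminus_diag, Rabs_R0, Rmult_0_l, Rplus_0_l. simpl. lra. }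
  exists (D * exp ((4 + b * Mphi) * L)). intros n x.
  eapply Rle_trans; [apply Hstep|]. pose proof (exp_weight_bounds x) as [_ Hw].
  assert (0 <= D * (/ 2) ^ n).
  { apply Rmult_le_pos; [| apply pow_le; lra]. pose proof b_Mphi_nonneg. pose proof (Rabs_pos s).
    unfold D. apply Rplus_le_le_0_compat; apply Rmult_le_pos; try apply pow2_ge_0; lra. }
  replace (D * exp ((4 + b * Mphi) * L) * (/ 2) ^ n) with (D * (/ 2) ^ n * exp ((4 + b * Mphi) * L))
    by ring.
  apply Rmult_le_compat_l; assumption.
Qed.

Definition picard_fix (a s x : R) : R := real (Lim_seq (fun n => picard_iter a s n x)).

Lemma picard_fix_approx (a s : R) : exists K, forall n x,
  Rabs (picard_fix a s x - picard_iter a s n x) <= K * (/ 2) ^ n.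
Proof.
  destruct (picard_iter_geometric a s) as [K HK]. exists (2 * K). intros n x.
  exact (Lim_seq_geometric (fun n => picard_iter a s n x) K (fun n => HK n x) n).
Qed.

Lemma continuous_picard_fix (a s x : R) : continuous (picard_fix a s) x.
Proof.
  destruct (picard_fix_approx a s) as [K HK].
  apply (continuous_of_geometric_approx (picard_iter a s) _ K); [| exact HK].
  intros n. apply continuous_picard_iter.
Qed.

Lemma picard_fix_eq (a s x : R) : picard_fix a s x = picard a s (picard_fix a s) x.
Proof.
  destruct (picard_fix_approx a s) as [K HK].
  assert (HK0 : 0 <= K).
  { specialize (HK 0%nat 0). simpl in HK. pose proof (Rabs_pos (picard_fix a s 0 - a)). lra. }
  pose proof (exp_weight_bounds x) as [_ HwL].
  enough (Rabs (picard_fix a s x - picard a s (picard_fix a s) x) <= 0).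
  { apply Rminus_diag_uniq, Rabs_eq_0.
    pose proof (Rabs_pos (picard_fix a s x - picard a s (picard_fix a s) x)). lra. }
  apply (le_of_le_geometric _ 0 (K / 2 + K / 2 * exp ((4 + b * Mphi) * L))). intros n.
  pose proof (HK (S n) x) as Hn. simpl in Hn.
  assert (Hc : Rabs (picard a s (picard_iter a s n) x - picard a s (picard_fix a s) x) <=
                 K * (/ 2) ^ n / 2 * exp ((4 + b * Mphi) * L)).
  { eapply Rle_trans; [apply (picard_contraction a s s _ _ (K * (/ 2) ^ n));
      [intros; apply continuous_picard_iter | intros; apply continuous_picard_fix |] |].
    - intros t Ht. rewrite Rabs_minus_sym. eapply Rle_trans; [apply HK|].
      rewrite <- (Rmult_1_r (K * (/ 2) ^ n)) at 1. apply Rmult_le_compat_l;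
        [apply Rmult_le_pos; [lra | apply pow_le; lra] | apply one_le_exp].
      pose proof b_Mphi_nonneg. nra.
    - rewrite Rminus_diag, Rabs_R0, Rmult_0_l, Rplus_0_l. apply Rmult_le_compat_l; [| exact HwL].
      assert (0 <= K * (/ 2) ^ n) by (apply Rmult_le_pos; [lra | apply pow_le; lra]). lra. }
  replace (picard_fix a s x - picard a s (picard_fix a s) x) with
    ((picard_fix a s x - picard a s (picard_iter a s n) x) +
     (picard a s (picard_iter a s n) x - picard a s (picard_fix a s) x)) by ring.
  eapply Rle_trans; [apply Rabs_triang|].
  replace ((K / 2 + K / 2 * exp ((4 + b * Mphi) * L)) * (/ 2) ^ n) with
    (K * (/ 2 * (/ 2) ^ n) + K * (/ 2) ^ n / 2 * exp ((4 + b * Mphi) * L)) by field.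
  lra.
Qed.

Lemma picard_fix_affine_bound (a s x : R) :
  Rabs (picard_fix a s x - (a + s * clamp 0 L x)) <= L ^ 2 * (2 + b * Mphi).
Proof. rewrite picard_fix_eq. apply picard_affine_bound. intros t. apply continuous_picard_fix. Qed.

Lemma picard_fix_lipschitz (a s1 s2 x : R) : 0 <= x <= L ->
  Rabs (picard_fix a s1 x - picard_fix a s2 x) <=
    2 * (Rabs (s1 - s2) * L) * exp ((4 + b * Mphi) * x).
Proof.
  pose proof b_Mphi_nonneg.
  apply (le_of_half_contraction (fun t => Rabs (picard_fix a s1 t - picard_fix a s2 t))
    (fun t => exp ((4 + b * Mphi) * t)) (fun t => 0 <= t <= L) _
    (Rabs (s1 - s2) * L + 2 * (L ^ 2 * (2 + b * Mphi)))).
  - apply Rmult_le_pos; [apply Rabs_pos | lra].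
  - pose proof (Rabs_pos (s1 - s2)). pose proof (pow2_ge_0 L).
    assert (0 <= Rabs (s1 - s2) * L) by (apply Rmult_le_pos; lra).
    assert (0 <= L ^ 2 * (2 + b * Mphi)) by (apply Rmult_le_pos; lra). lra.
  - intros t Ht. apply one_le_exp. nra.
  - intros t Ht.
    pose proof (picard_fix_affine_bound a s1 t). pose proof (picard_fix_affine_bound a s2 t).
    rewrite clamp_id in * by exact Ht.
    assert (Rabs ((s1 - s2) * t) <= Rabs (s1 - s2) * L).
    { rewrite Rabs_mult, (Rabs_pos_eq t) by lra. apply Rmult_le_compat_l; [apply Rabs_pos | lra]. }
    split_Rabs; lra.
  - intros E HE t Ht. rewrite (picard_fix_eq a s1 t), (picard_fix_eq a s2 t).
    rewrite <- (clamp_id 0 L t Ht) at 3.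
    apply picard_contraction; [intros; apply continuous_picard_fix .. | exact HE].
Qed.

Lemma picard_fix_0 (a s : R) : picard_fix a s 0 = a.
Proof.
  rewrite picard_fix_eq. unfold picard. rewrite clamp_id by lra. rewrite prim_0. ring.
Qed.

Lemma picard_fix_shooting (a : R) : exists s, picard_fix a s L = a.
Proof.
  set (g := fun s => picard_fix a s L - a).
  set (M := L * (2 + b * Mphi) + 1).
  assert (HM : 0 < M) by (pose proof b_Mphi_nonneg; unfold M; nra).
  assert (Hval : forall s, Rabs (g s - s * L) <= L ^ 2 * (2 + b * Mphi)).
  { intros s. pose proof (picard_fix_affine_bound a s L). rewrite clamp_id in * by lra.
    unfold g. replace (picard_fix a s L - a - s * L) with (picard_fix a s L - (a + s * L)) by ring.
    assumption. }
  assert (Hcont : continuity g).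
  { intros s0. apply continuity_pt_filterlim, continuous_eps. intros e He.
    set (K := 2 * L * exp ((4 + b * Mphi) * L)).
    assert (HK : 0 < K) by (unfold K; pose proof (exp_pos ((4 + b * Mphi) * L)); nra).
    exists (e / K). split; [apply Rdiv_lt_0_compat; lra|]. intros s Hs.
    unfold g. replace (picard_fix a s L - a - (picard_fix a s0 L - a)) with
      (picard_fix a s L - picard_fix a s0 L) by ring.
    eapply Rle_lt_trans; [apply picard_fix_lipschitz; lra|].
    replace (2 * (Rabs (s - s0) * L) * exp ((4 + b * Mphi) * L)) with (Rabs (s - s0) * K)
      by (unfold K; ring).
    replace e with (e / K * K) by (field; lra). apply Rmult_lt_compat_r; assumption. }
  destruct (IVT g (- M) M Hcont ltac:(lra)) as [s [_ Hs]].
  - pose proof (Hval (- M)). unfold M in *. split_Rabs; nra.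
  - pose proof (Hval M). unfold M in *. split_Rabs; nra.
  - exists s. unfold g in Hs. lra.
Qed.

Lemma picard_fix_twice_derivable (a s : R) :
  twice_derivable_on (picard_fix a s) (fun x => s + prim (fun t => rhs t (picard_fix a s t)) x)
    (fun x => rhs x (picard_fix a s x)) 0 L.
Proof.
  set (h := fun t => rhs t (picard_fix a s t)).
  assert (Hh : forall t, continuous h t) by (intros t; apply continuous_rhs, continuous_picard_fix).
  intros x Hx. split.
  - apply (is_derive_ext_loc (fun y => a + s * y + prim (prim h) y));
      [| apply is_derive_affine_plus_prim2, Hh].
    exists (mkposreal (Rmin x (L - x)) (Rmin_pos x (L - x) ltac:(lra) ltac:(lra))).
    intros y Hy. change (Rabs (y - x) < Rmin x (L - x)) in Hy.
    pose proof (Rmin_l x (L - x)). pose proof (Rmin_r x (L - x)).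
    rewrite (picard_fix_eq a s y). unfold picard. rewrite clamp_id; [reflexivity | split_Rabs; lra].
  - pose proof (is_derive_plus (fun _ => s) (prim h) x 0 (h x)
      (is_derive_const (K := R_AbsRing) s x) (is_derive_prim h x Hh)) as Hd.
    change (plus 0 (h x)) with (0 + h x) in Hd. rewrite Rplus_0_l in Hd. exact Hd.
Qed.

(* Where the solution leaves [[0, 1]] the truncated right-hand side has a sign: [b phi >= 0]
   above [1] and [0] below [0], so the maximum principle pushes it back. *)
Lemma picard_fix_unit_bounds (a s : R) : 0 <= a <= 1 -> picard_fix a s L = a ->
  forall x, 0 <= x <= L -> 0 <= picard_fix a s x <= 1.
Proof.
  intros Ha HaL.
  set (F := picard_fix a s) in *. set (h := fun t => rhs t (F t)).
  set (dF := fun x => s + prim h x).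
  assert (Hc : cont_on_closed F 0 L) by (apply continuous_cont_on_closed, continuous_picard_fix).
  assert (Hd : twice_derivable_on F dF h 0 L) by apply picard_fix_twice_derivable.
  assert (HF0 : F 0 = a) by apply picard_fix_0.
  intros x Hx. split.
  - enough (-1 * F x + 0 <= 0) by lra.
    apply (max_principle (fun y => -1 * F y + 0) (fun y => -1 * dF y + 0) (fun y => -1 * h y + 0)
      0 L 0 HL); [| | cbv beta; lra | cbv beta; lra | | exact Hx].
    + apply cont_on_closed_scal_plus; [exact Hc | intros; apply continuous_const].
    + apply twice_derivable_on_scal_plus; [exact Hd|].
      intros y. split; exact (is_derive_const (K := R_AbsRing) (V := R_NormedModule) 0 y).
    + intros y Hy Hneg. unfold h, rhs.
      replace (clamp 0 1 (F y)) with 0 by (unfold clamp, Rmax, Rmin; repeat destruct Rle_dec; lra).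
      lra.
  - apply (max_principle F dF h 0 L 1 HL Hc Hd); [lra | lra | | exact Hx].
    intros y Hy Habove. unfold h, rhs.
    replace (clamp 0 1 (F y)) with 1 by (unfold clamp, Rmax, Rmin; repeat destruct Rle_dec; lra).
    pose proof (b_phi_clamp_bounds y).
    lra.
Qed.

Lemma exists_solution01 (eps : R) : 0 < eps < 1 -> exists psi, is_solution01 L b eps phi psi.
Proof.
  intros Heps. destruct (picard_fix_shooting (1 - eps)) as [s Hs].
  set (F := picard_fix (1 - eps) s).
  assert (H01 : forall x, 0 <= x <= L -> 0 <= F x <= 1)
    by (apply picard_fix_unit_bounds; lra || exact Hs).
  exists F. split; [split; [| split; [| split]] | exact H01].
  - apply continuous_cont_on_closed, continuous_picard_fix.
  - exists (fun x => s + prim (fun t => rhs t (F t)) x). intros x Hx.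
    destruct (picard_fix_twice_derivable (1 - eps) s x Hx) as [Hd1 Hd2]. split; [exact Hd1|].
    replace (- (F x * (1 - b * phi x - F x))) with (rhs x (F x)); [exact Hd2|].
    unfold rhs. rewrite (clamp_id 0 1 (F x)) by (apply H01; lra).
    rewrite (clamp_id 0 L x) by lra. ring.
  - apply picard_fix_0.
  - exact Hs.
Qed.

End Existence.

Lemma solution01_estimates (L b Mphi m eps C d : R) (phi psi : R -> R) :
  0 < L -> 0 <= b -> (forall x, 0 <= x <= L -> 0 <= phi x <= Mphi) ->
  0 < eps < 1 -> 0 < C -> 0 < d -> 4 * d <= L -> d <= (1 - eps) / (4 * C + 4) ->
  (forall x, d / 2 <= x <= L - d / 2 -> m <= phi x) -> (16 / ((1 - eps) * d)) ^ 2 <= b * m - 1 ->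
  is_solution01 L b eps phi psi ->
  (forall x, 0 < x < L -> psi x < 1 - eps) /\
  (exists d0, is_right_deriv psi 0 d0 /\ d0 < - C) /\
  (exists dL, is_left_deriv psi L dL /\ C < dL).
Proof.
  intros HL Hb Hphi Heps HC Hd HdL HdC Hm Hkm [[Hc [[dpsi Hderiv] [H0 H1]]] H01].
  apply (solution_boundary_estimates L b Mphi (1 - eps) phi psi dpsi HL Hb Hphi Hc Hderiv H01 H0 H1
    C m d); lra || assumption.
Qed.

Lemma exists_coefficient_above (k m : R) : 0 < m -> exists b, 2 <= b /\ k ^ 2 <= b * m - 1.
Proof.
  intros Hm. exists (Rmax 2 ((k ^ 2 + 1) / m)). split; [apply Rmax_l|].
  enough (k ^ 2 + 1 <= Rmax 2 ((k ^ 2 + 1) / m) * m) by lra.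
  replace (k ^ 2 + 1) with ((k ^ 2 + 1) / m * m) at 1 by (field; apply Rgt_not_eq, Hm).
  apply Rmult_le_compat_r; [lra | apply Rmax_r].
Qed.

Theorem lemma3 (L eps C : R) (phi : R -> R)
  (hL : PI < L) (heps : 0 < eps < 1) (hC : 0 < C)
  (hphic : cont_on_closed phi 0 L) (hphi0 : phi 0 = 0) (hphiL : phi L = 0)
  (hphipos : forall x, 0 < x < L -> 0 < phi x) :
  exists bbar : R, 1 < bbar /\
    (exists psi, is_solution01 L bbar eps phi psi) /\
    (forall psi : R -> R, is_solution01 L bbar eps phi psi ->
       (forall x, 0 < x < L -> psi x < 1 - eps) /\
       (exists d0, is_right_deriv psi 0 d0 /\ d0 < - C) /\
       (exists dL, is_left_deriv psi L dL /\ C < dL)).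
Proof.
  (* [PI < L] is only used through [0 < L]. *)
  assert (HL : 0 < L) by (pose proof PI_RGT_0; lra).
  assert (Hphi : forall x, 0 <= x <= L -> 0 <= phi x).
  { intros x Hx. destruct (Req_dec x 0) as [-> | H0]; [lra|].
    destruct (Req_dec x L) as [-> | H1]; [lra|]. apply Rlt_le, hphipos. lra. }
  destruct (cont_on_closed_max phi 0 L ltac:(lra) hphic) as [xM [_ HM]].
  set (d := Rmin (L / 4) ((1 - eps) / (4 * C + 4))).
  assert (Hd : 0 < d /\ 4 * d <= L /\ d <= (1 - eps) / (4 * C + 4)).
  { pose proof (Rmin_l (L / 4) ((1 - eps) / (4 * C + 4))).
    pose proof (Rmin_r (L / 4) ((1 - eps) / (4 * C + 4))).
    pose proof (Rmin_pos (L / 4) ((1 - eps) / (4 * C + 4)) ltac:(lra)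
      ltac:(apply Rdiv_lt_0_compat; lra)). unfold d; lra. }
  destruct (cont_on_closed_pos_lower_bound phi (d / 2) (L - d / 2)) as [m [Hm0 Hm]];
    [lra | apply (cont_on_closed_sub phi 0 L); lra || exact hphic
    | intros x Hx; apply hphipos; lra |].
  destruct (exists_coefficient_above (16 / ((1 - eps) * d)) m Hm0) as [bbar [Hb2 Hkm]].
  exists bbar. split; [lra|]. split.
  - apply (exists_solution01 L bbar (phi xM) phi); [lra | lra | exact hphic | | exact heps].
    intros x Hx. split; [apply Hphi | apply HM]; exact Hx.
  - intros psi Hpsi. apply (solution01_estimates L bbar (phi xM) m eps C d phi psi);
      [lra | lra | intros x Hx; split; [apply Hphi | apply HM]; exact Hx | lra ..
      | exact Hm | exact Hkm | exact Hpsi].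
Qed.
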